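(* Let $X$ be a finite set, $t_1<\dots<t_M$ real numbers and $(\mathcal{P}^{t_m})_{m\le M}$ partitions of $X$ with Multiscale Clustering Filtration $(K^{t_m})_{m\le M}$, and let $K:=K^{t_M}$. For every integer $1\le k\le\dim(K)-1$: (i) $c_k(t_1)=b_k(t_1)$ and $c_k(t_m)=\beta_k^{t_m}-\beta_k^{t_{m-1}}$ for $2\le m\le M$; (ii) $\beta_k^{t_m}=\sum_{l=1}^m c_k(t_l)$ for all $1\le m\le M$.
   Context: A partition of $X$ is a collection of non-empty pairwise disjoint subsets (clusters) whose union is $X$. For a finite non-empty set $C$, $\Delta C$ is the set of all non-empty subsets of $C$. The MCF is $K^{t_m}:=\bigcup_{l\le m}\bigcup_{C\in\mathcal{P}^{t_l}}\Delta C$ for $1\le m\le M$, with $K^{t_0}:=\emptyset$. $\dim(K)$ is the maximal dimension of a simplex in $K$. Homology is simplicial homology over $\mathbb{Z}_2$; $\beta_k^{t_m}$ is the dimension of $H_k(K^{t_m})$. For $0\le i\le j\le M$ let $\beta_k^{i,j}$ be the rank of the map $H_k(K^{t_i})\to H_k(K^{t_j})$ induced by inclusion. For $1\le i<j\le M$, $\mu_k^{t_i,t_j}:=\beta_k^{i,j-1}-\beta_k^{i,j}-\beta_k^{i-1,j-1}+\beta_k^{i-1,j}$ is the number of independent $k$-dimensional classes born at index $i$ and dying at index $j$, and $\mu_k^{t_i,\infty}:=\beta_k^{i,M}-\beta_k^{i-1,M}$ is the number born at index $i$ that never die. Define $b_k(t_m):=\sum_{l=m+1}^M\mu_k^{t_m,t_l}+\mu_k^{t_m,\infty}$,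 $d_k(t_m):=\sum_{l=1}^{m-1}\mu_k^{t_l,t_m}$, and the persistent conflict $c_k(t_m):=b_k(t_m)-d_k(t_m)$. *)

From HB Require Import structures.
From mathcomp Require Import all_boot all_order all_algebra.
Set Implicit Arguments. Unset Strict Implicit. Unset Printing Implicit Defensive.
Import Order.TTheory GRing.Theory Num.Theory.

Section Homology.
Variable X : finType.

(* Chains: row vectors over 'F_2 indexed by all subsets of X. *)
Definition nS := #|{set X}|.
Definition sv (i : 'I_nS) : {set X} := enum_val i.

Definition Delta (C : {set X}) : {set {set X}} := powerset C :\ set0.

Definition dimK (K : {set {set X}}) : nat := (\max_(s in K) #|s|).-1.

(* boundary operator: a simplex s (with #|s| >= 2) is sent to the sum of its
   codimension-one faces; vertices have boundary 0 (unreduced homology). *)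
Definition bd : 'M['F_2]_(nS, nS) :=
  \matrix_(i, j) ((sv j \subset sv i)
                  && (#|sv j|.+1 == #|sv i|)%N
                  && (0 < #|sv j|)%N)%:R%R.

(* C_k(K): span of the indicator vectors of the k-simplices of K *)
Definition chains (K : {set {set X}}) (k : nat) : 'M['F_2]_(nS, nS) :=
  \matrix_(i, j) ((i == j) && (sv i \in K) && (#|sv i| == k.+1)%N)%:R%R.

Definition cycles (K : {set {set X}}) (k : nat) :=
  (chains K k :&: kermx bd)%MS.

Definition boundaries (K : {set {set X}}) (k : nat) : 'M['F_2]_(nS, nS) :=
  (chains K k.+1 *m bd)%R.

Definition betti (K : {set {set X}}) (k : nat) : nat :=
  \rank (cycles K k) - \rank (boundaries K k).

(* rank of H_k(K) -> H_k(K') induced by inclusion K <= K':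
   its image is (Z_k(K) + B_k(K')) / B_k(K'). *)
Definition pers_betti (K K' : {set {set X}}) (k : nat) : nat :=
  \rank (cycles K k + boundaries K' k)%MS - \rank (boundaries K' k).

Section MCF.
Variable P : nat -> {set {set X}}.   (* P m = partition at time t_m, 1 <= m *)
Variable M : nat.

Definition MCF (m : nat) : {set {set X}} :=
  \bigcup_(1 <= l < m.+1) \bigcup_(C in P l) Delta C.

Definition pbetti (k i j : nat) : int := (pers_betti (MCF i) (MCF j) k)%:Z.

Definition mu (k i j : nat) : int :=
  (pbetti k i j.-1 - pbetti k i j - pbetti k i.-1 j.-1 + pbetti k i.-1 j)%R.

Definition mu_inf (k i : nat) : int := (pbetti k i M - pbetti k i.-1 M)%R.

Definition birth (k m : nat) : int :=
  (\sum_(m.+1 <= l < M.+1) mu k m l + mu_inf k m)%R.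

Definition death (k m : nat) : int := (\sum_(1 <= l < m) mu k l m)%R.

Definition conflict (k m : nat) : int := (birth k m - death k m)%R.

End MCF.
End Homology.

From mathcomp Require Import all_boot all_order all_algebra.
From mathcomp Require Import zify ring.
Set Implicit Arguments. Unset Strict Implicit. Unset Printing Implicit Defensive.
Import GRing.Theory.

(* Both counts telescope, along a row and along a column of the persistence
   diagram: b_k(t_m) = beta_k^{m,m} - beta_k^{m-1,m} and
   d_k(t_m) = beta_k^{m-1,m-1} - beta_k^{m-1,m}, so the mixed term cancels in
   c_k(t_m) = beta_k^{m,m} - beta_k^{m-1,m-1}.  Every K^{t_m} is closed under
   taking faces, and the boundary squares to zero over Z_2 because a
   codimension-two face J of I lies in exactly the two facets J + x,
   x in I \ J; hence boundaries are cycles and beta_k^{m,m} = beta_k^{t_m}.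
   Summing the c_k telescopes once more, down to K^{t_0} = {}. *)

Lemma card_intermediate (T : finType) (J I : {set T}) : J \subset I ->
  #|[set S : {set T} | [&& J \subset S, S \subset I & #|S| == #|J|.+1]]| =
  #|I :\: J|.
Proof.
move=> JI; rewrite -(card_in_imset (f := fun x => x |: J) (D := I :\: J)); last first.
  move=> x y; rewrite !inE => /andP[xJ _] /andP[yJ _] /= /setP /(_ x).
  by rewrite !inE eqxx /= (negbTE xJ) orbF => /esym/eqP.
suff -> : [set S : {set T} | [&& J \subset S, S \subset I & #|S| == #|J|.+1]] =
          [set x |: J | x in I :\: J] by [].
apply/setP => S; rewrite inE; apply/idP/imsetP.
- case/and3P => JS SI /eqP eS.
  have /set0Pn[x]: S :\: J != set0.
    by rewrite -card_gt0 cardsD (setIidPr JS) eS subSnn.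
  rewrite inE => /andP[xJ xS]; exists x; first by rewrite inE xJ (subsetP SI).
  apply/eqP; rewrite eq_sym eqEcard subUset sub1set xS JS cardsU1 xJ eS /=.
  by rewrite add1n.
- case=> x; rewrite inE => /andP[xJ xI] ->.
  by rewrite subsetUr subUset sub1set xI JI cardsU1 xJ add1n eqxx.
Qed.

Section Boundary.
Variable X : finType.
Local Open Scope ring_scope.

Definition facet (s S : {set X}) :=
  (s \subset S) && (#|s|.+1 == #|S|)%N && (0 < #|s|)%N.

Lemma bdE i j : bd X i j = (facet (sv j) (sv i))%:R.
Proof. by rewrite mxE. Qed.

Lemma card_intermediate_facets (J I : {set X}) :
  #|[set S : {set X} | facet S I && facet J S]| =
  if [&& J \subset I, #|I| == #|J|.+2 & (0 < #|J|)%N] then 2%N else 0%N.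
Proof.
case: ifP => [/and3P[JI /eqP eI J0] | h]; last first.
  apply/eqP; rewrite cards_eq0; apply/eqP/setP => S; rewrite !inE.
  apply/negbTE/negP => /andP[/andP[/andP[SI /eqP eS] _] /andP[/andP[JS /eqP eJ] J0]].
  by move/negbT: h; rewrite (subset_trans JS SI) -eS -eJ eqxx J0.
have -> : 2%N = #|I :\: J| by rewrite cardsD (setIidPr JI) eI; lia.
rewrite -card_intermediate //.
suff -> : [set S | facet S I && facet J S] =
          [set S : {set X} | [&& J \subset S, S \subset I & #|S| == #|J|.+1]] by [].
apply/setP => S; rewrite !inE /facet eI J0 eqSS (eq_sym #|J|.+1).
by case: eqP => [->|_]; rewrite ?andbF //= !andbT andbC.
Qed.

Lemma bd_mulmx_bd : bd X *m bd X = 0.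
Proof.
apply/matrixP => i j; rewrite !mxE.
pose c S := facet S (sv i) && facet (sv j) S.
have -> : \sum_u bd X i u * bd X u j = (\sum_(S in {set X}) c S)%N%:R.
  rewrite natr_sum (big_enum_val (A := {set X}) (fun S => (c S)%:R)) /=.
  by apply: eq_bigr => u _; rewrite !bdE -natrM mulnb.
have -> : (\sum_(S in {set X}) c S)%N = #|[set S | c S]|.
  by rewrite -sum1_card [RHS]big_mkcond; apply: eq_bigr => S _; rewrite inE; case: (c S).
by rewrite card_intermediate_facets; case: ifP => _; apply: val_inj. (* 2 = 0 in 'F_2 *)
Qed.

End Boundary.

Section Complexes.
Variable X : finType.
Local Open Scope ring_scope.
Implicit Types (K : {set {set X}}) (k : nat).

Definition down_closed K :=
  forall s t : {set X}, s \in K -> t \subset s -> t != set0 -> t \in K.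

Lemma down_closed_Delta C : down_closed (Delta C).
Proof.
move=> s t; rewrite !inE => /andP[_ sC] ts ->.
exact: subset_trans ts sC.
Qed.

Lemma down_closed_bigcup (I : Type) (r : seq I) (P : pred I) (F : I -> {set {set X}}) :
  (forall i, P i -> down_closed (F i)) -> down_closed (\bigcup_(i <- r | P i) F i).
Proof.
move=> dF; apply: big_ind => [s t|A B dA dB s t|//]; first by rewrite inE.
rewrite !inE => /orP[sA|sB] ts t0; first by rewrite (dA s).
by rewrite (dB s) ?orbT.
Qed.

Lemma chainsE K k :
  chains K k = diag_mx (\row_i ((sv i \in K) && (#|sv i| == k.+1)%N)%:R).
Proof.
apply/matrixP => i j; rewrite !mxE.
by case: eqVneq => [->|]; rewrite ?mulr1n ?mulr0n.
Qed.

Lemma facet_in_complex K k (s S : {set X}) : down_closed K ->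
  facet s S -> S \in K -> #|S| = k.+2 -> (s \in K) && (#|s| == k.+1)%N.
Proof.
move=> dK /andP[/andP[sS /eqP es] s0] SK eS.
by rewrite (dK S) -?card_gt0 //= -eqSS es eS.
Qed.

Lemma chains_mulmx_bd K k : down_closed K ->
  chains K k.+1 *m bd X = chains K k.+1 *m bd X *m chains K k.
Proof.
move=> dK; rewrite !chainsE mul_diag_mx mul_mx_diag; apply/matrixP => i j.
rewrite !mxE -/(facet (sv j) (sv i)).
have [f|] := boolP (facet (sv j) (sv i)); last by rewrite !mulr0 mul0r.
have [/andP[Ki /eqP eI]|] := boolP ((sv i \in K) && (#|sv i| == k.+2)%N).
  by rewrite (facet_in_complex dK f Ki eI) !mulr1.
by rewrite !mul0r.
Qed.

Lemma boundaries_sub_cycles K k : down_closed K -> (boundaries K k <= cycles K k)%MS.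
Proof.
move=> dK; rewrite sub_capmx sub_kermx /boundaries -mulmxA bd_mulmx_bd mulmx0 eqxx andbT.
by rewrite (chains_mulmx_bd k dK) submxMl.
Qed.

Lemma pers_betti_refl K k : down_closed K -> pers_betti K K k = betti K k.
Proof.
by move=> dK; rewrite /pers_betti /betti (addsmx_idPl (boundaries_sub_cycles k dK)).
Qed.

Lemma pers_betti_set0 K k : pers_betti set0 K k = 0%N.
Proof.
rewrite /pers_betti /cycles; have -> : chains (set0 : {set {set X}}) k = 0.
  by apply/matrixP => i j; rewrite !mxE inE andbF.
by rewrite cap0mx adds0mx subnn.
Qed.

Lemma MCF0 (P : nat -> {set {set X}}) : MCF P 0 = set0.
Proof. by rewrite /MCF big_geq. Qed.

Lemma down_closed_MCF (P : nat -> {set {set X}}) m : down_closed (MCF P m).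
Proof.
apply: down_closed_bigcup => l _; apply: down_closed_bigcup => C _.
exact: down_closed_Delta.
Qed.

End Complexes.

Section Persistence.
Variables (X : finType) (P : nat -> {set {set X}}) (M k : nat).
Local Open Scope ring_scope.
Local Notation p := (pbetti P k).
Local Notation beta m := (betti (MCF P m) k)%:Z.

Lemma pbetti0l j : p 0 j = 0.
Proof. by rewrite /pbetti MCF0 pers_betti_set0. Qed.

Lemma pbetti_diag m : p m m = beta m.
Proof. by rewrite /pbetti pers_betti_refl //; apply: down_closed_MCF. Qed.

Lemma birthE m : (m <= M)%N -> birth P M k m = p m m - p m.-1 m.
Proof.
move=> mM; rewrite /birth /mu_inf.
rewrite (telescope_sumr_eq (fun l => p m.-1 l.-1 - p m l.-1)) ?ltnS //=; first by ring.
by move=> l _; rewrite /mu; ring.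
Qed.

Lemma deathE m : (0 < m)%N -> death P k m = p m.-1 m.-1 - p m.-1 m.
Proof.
move=> m0; rewrite /death.
rewrite (telescope_sumr_eq (fun l => p l.-1 m.-1 - p l.-1 m)) //=.
  by rewrite !pbetti0l subrr subr0.
by move=> l _; rewrite /mu; ring.
Qed.

Lemma conflictE m : (0 < m <= M)%N -> conflict P M k m = beta m - beta m.-1.
Proof.
by case/andP=> m0 mM; rewrite /conflict birthE // deathE // !pbetti_diag; ring.
Qed.

Lemma betti_MCF_sum_conflict m : (m <= M)%N ->
  beta m = \sum_(1 <= l < m.+1) conflict P M k l.
Proof.
move=> mM; rewrite big_add1 /= (telescope_sumr_eq (fun l => beta l)) //.
  by rewrite -(pbetti_diag 0) pbetti0l subr0.
by move=> l /andP[_ lm]; rewrite conflictE // (leq_trans lm mM).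
Qed.

End Persistence.

Theorem proposition5 (X : finType) (R : realFieldType) (M : nat)
  (t : nat -> R) (P : nat -> {set {set X}})
  (ht : forall m, 1 <= m -> m < M -> (t m < t m.+1)%R)
  (hP : forall m, 1 <= m <= M -> partition (P m) [set: X])
  (k : nat) (hk1 : 1 <= k) (hk2 : k <= (dimK (MCF P M)).-1) :
  (conflict P M k 1 = birth P M k 1 /\
   forall m, 2 <= m <= M ->
     conflict P M k m =
       ((betti (MCF P m) k)%:Z%R - (betti (MCF P m.-1) k)%:Z%R)%R)
  /\
  (forall m, 1 <= m <= M ->
     (betti (MCF P m) k)%:Z%R = (\sum_(1 <= l < m.+1) conflict P M k l)%R).
Proof.
split; first split.
- by rewrite /conflict /death big_geq // subr0.
- by move=> m /andP[m2 mM]; rewrite conflictE // mM (ltnW m2).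
- by move=> m /andP[_ mM]; apply: betti_MCF_sum_conflict.
Qed.
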